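(* Let $n>k\geq3$ be odd integers, let $A$ be a cyclically $k$-diagonal $n\times n$ array and let $g=\gcd(n,k-1)$. If $\gcd(g+1,k-1)=2$, then there exists a solution to $P(A)$.
   Context: Arrays are partially filled and toroidal; $F(A)$ is the set of filled cells. $s_R(i,j)=(i,j+t)$, $s_C(i,j)=(i+t,j)$ with $t\ge1$ minimal such that the cell is filled. For $R\in\{-1,1\}^n$, $C\in\{-1,1\}^n$, $CN_{RC}(i,j)=s_C^{c_{j'}}(i,j')$ where $(i,j')=s_R^{r_i}(i,j)$. A solution to $P(A)$ is a pair $R,C$ such that $CN_{RC}$ is a permutation of $F(A)$ forming a single cycle of length $|F(A)|$. An $n\times n$ array is cyclically $k$-diagonal if its filled cells are exactly the $(i,j)$ with $i-j\bmod n\in\{0,\dots,k-1\}$. *)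

From mathcomp Require Import all_boot.
Set Implicit Arguments. Unset Strict Implicit. Unset Printing Implicit Defensive.

(* Cells of an n x n toroidal array are pairs (i,j) : 'I_n * 'I_n (row, column).
   A partially filled array A is represented by its set of filled cells F(A). *)
Definition cell n := ('I_n * 'I_n)%type.

(* step P f x = f^t x, where t >= 1 is minimal with P (f^t x)
   (searched among t = 1..n; f will be a cyclic shift of 'I_n). *)
Definition step n (P : pred 'I_n) (f : 'I_n -> 'I_n) (x : 'I_n) : 'I_n :=
  iter (find (fun t => P (iter t f x)) (iota 1 n)).+1 f x.

(* Signs in {-1,1} are encoded as booleans: true = +1, false = -1. *)
Definition shift n (s : bool) : 'I_n -> 'I_n := if s then @ordS n else @ord_pred n.

Definition sR n (F : {set cell n}) (s : bool) (c : cell n) : cell n :=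
  (c.1, step (fun j => (c.1, j) \in F) (@shift n s) c.2).

Definition sC n (F : {set cell n}) (s : bool) (c : cell n) : cell n :=
  (step (fun i => (i, c.2) \in F) (@shift n s) c.1, c.2).

Definition CN n (F : {set cell n}) (R C : 'I_n -> bool) (c : cell n) : cell n :=
  let c' := sR F (R c.1) c in sC F (C c'.2) c'.

(* (R,C) is a solution to P(A): CN_{RC} is a permutation of F(A) consisting of a
   single cycle of length |F(A)|, i.e. it maps F(A) into F(A), is injective on
   F(A), and every filled cell is reached from every filled cell by iteration. *)
Definition is_solution n (F : {set cell n}) (R C : 'I_n -> bool) : Prop :=
  [/\ {in F, forall c, CN F R C c \in F},
      {in F &, injective (CN F R C)} &
      {in F &, forall c d, exists m, iter m (CN F R C) c = d}].

(* Cyclically k-diagonal n x n array: filled cells are (i,j) with (i - j mod n) in {0..k-1}. *)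
Definition cyc_diag n k : {set cell n} :=
  [set c : cell n | (c.1 + (n - c.2)) %% n < k].

(* Take R = -1 and c_j = +1 exactly on the strip of columns j <= g, and write
   a filled cell as (j, d) with j its column and d < k its diagonal.  A step of
   CN moves a cell with d < k - 1 one column to the left, raising d by 2 inside
   the strip and keeping it outside; a cell (j, k - 1) jumps k - 1 columns to
   the right, onto diagonal 1 inside the strip and onto k - 1 outside.  As CN is
   injective on the finite set F(A), it is a single cycle once every cell
   reaches (0, k - 1).
   Since k is odd, every cell reaches the top diagonal inside the strip.  From
   (s, k - 1) with 0 < s < g the jumps land back in column s, because
   gcd(n, k - 1) = g, and the climb then returns to column s - (k - 1) modulo
   g + 1; as gcd(g + 1, k - 1) = 2 this connects the points of each parity.
   From (g, k - 1) the jumps land in column 0, connecting the odd class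
   (which contains g) to the even one (which contains 0). *)

From mathcomp Require Import all_boot zify.
Set Implicit Arguments. Unset Strict Implicit. Unset Printing Implicit Defensive.

Definition reaches (T : Type) (f : T -> T) (x y : T) := exists m, iter m f x = y.

Lemma reaches_refl (T : Type) (f : T -> T) x : reaches f x x.
Proof. by exists 0. Qed.

Lemma reaches_trans (T : Type) (f : T -> T) x y z :
  reaches f x y -> reaches f y z -> reaches f x z.
Proof. by move=> [a <-] [b <-]; exists (b + a); rewrite iterD. Qed.

Lemma reaches_step (T : Type) (f : T -> T) x y : reaches f (f x) y -> reaches f x y.
Proof. by move=> [a <-]; exists a.+1; rewrite iterSr. Qed.

Lemma iter_conj_in (A B : Type) (f : A -> A) (h : B -> B) (e : B -> A) (Q : pred B) :
  {in Q, forall x, h x \in Q} -> {in Q, forall x, f (e x) = e (h x)} ->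
  forall m, {in Q, forall x, iter m f (e x) = e (iter m h x)}.
Proof.
move=> hQ fe; elim=> [//|m IH] x xQ; rewrite !iterS IH // fe //.
by elim: m {IH} => //= m IHm; apply: hQ.
Qed.

Section InjectiveOrbits.
Variables (T : finType) (P : {pred T}) (f : T -> T).
Hypothesis f_in : {in P, forall x, f x \in P}.
Hypothesis f_inj : {in P &, injective f}.

Lemma iter_in m x : x \in P -> iter m f x \in P.
Proof. by move=> xP; elim: m => //= m IH; apply: f_in. Qed.

Lemma iter_inj_in m : {in P &, injective (iter m f)}.
Proof.
elim: m => [//|m IH] y z yP zP /= e.
by apply: IH => //; apply: f_inj => //; apply: iter_in.
Qed.

Lemma iter_period x : x \in P -> exists2 p, 0 < p & iter p f x = x.
Proof.
move=> xP; pose orb (i : 'I_#|T|.+1) := iter i f x.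
have /injectivePn [i [j ij eij]] : ~~ injectiveb orb.
  by apply/injectiveP => /leq_card; rewrite card_ord ltnn.
wlog lt_ij : i j ij eij / i < j.
  move=> W; case: (ltngtP i j) => h; first exact: (W i j).
    by apply: (W j i) => //; rewrite eq_sym.
  by move: ij; rewrite (val_inj h) eqxx.
exists (j - i); first by rewrite subn_gt0.
apply: (@iter_inj_in i); rewrite ?iter_in //.
by rewrite -iterD subnKC ?(ltnW lt_ij) //; apply/esym.
Qed.

(* From [x] go to [z], which lies on the (periodic) orbit of [y], then follow
   that orbit around to [y]. *)
Lemma reaches_in_of_sink z :
  {in P, forall x, reaches f x z} -> {in P &, forall x y, reaches f x y}.
Proof.
move=> sink x y xP yP; have [a xz] := sink x xP; have [b yz] := sink y yP.
have [p p_gt0 yp] := iter_period yP.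
exists (p * b - b + a); rewrite iterD xz -yz -iterD subnK ?leq_pmull //.
by rewrite mulnC iterM; elim: b {yz} => //= b ->.
Qed.

End InjectiveOrbits.

Lemma iter_addmod N c m x : x < N ->
  iter m (fun y => (y + c) %% N) x = (x + m * c) %% N.
Proof.
move=> xN; elim: m => [|m IH]; first by rewrite addn0 modn_small.
by rewrite iterS IH modnDml mulSn [c + _]addnC addnA.
Qed.

Lemma modn_small_twice x d : x < d + d -> x %% d = if x < d then x else x - d.
Proof.
move=> xd; case: ifP => lt_xd; first by rewrite modn_small.
have le_dx : d <= x by rewrite leqNgt lt_xd.
by rewrite -{1}(subnK le_dx) modnDr modn_small; lia.
Qed.

Section Dynamics.
Variables n k g : nat.
Hypotheses (k_ge3 : 3 <= k) (k_lt_n : k < n).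

Definition col_pred j := if j == 0 then n.-1 else j.-1.
Definition col_jump j := (j + k.-1) %% n.

(* The filled cell of column j on diagonal d = i - j mod n (d < k) has
   coordinates (j, d).  In these coordinates s_R^{-1} is [row_step],
   s_C^{+1} and s_C^{-1} are [col_step true] and [col_step false], and
   [cn_coord] is CN_{RC} for R = -1 and c_j = +1 exactly when j <= g. *)
Definition row_step (x : nat * nat) : nat * nat :=
  if x.2 == k.-1 then (col_jump x.1, 0) else (col_pred x.1, x.2.+1).

Definition col_step (s : bool) (x : nat * nat) : nat * nat :=
  (x.1, if s then x.2.+1 %% k else (x.2 + k.-1) %% k).

Definition cn_coord (x : nat * nat) : nat * nat :=
  let y := row_step x in col_step (y.1 <= g) y.

Definition in_range (x : nat * nat) := (x.1 < n) && (x.2 < k).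

Local Notation reach := (reaches cn_coord).

Lemma col_pred_lt j : j < n -> col_pred j < n.
Proof. by case: j => [|j] jn; [rewrite /= prednK | apply: ltnW]. Qed.

Lemma col_jump_lt j : col_jump j < n.
Proof. by rewrite /col_jump ltn_mod; lia. Qed.

Lemma col_pred0 : col_pred 0 = n.-1. Proof. by []. Qed.
Lemma col_predS j : col_pred j.+1 = j. Proof. by []. Qed.

Lemma row_step_in_range x : in_range x -> in_range (row_step x).
Proof.
case: x => j d /andP [/= jn dk]; rewrite /row_step /in_range /=.
by case: eqP => [_|dk1] /=; rewrite ?col_jump_lt ?col_pred_lt //; lia.
Qed.

Lemma col_step_in_range s x : in_range x -> in_range (col_step s x).
Proof.
case: x => j d /andP [/= jn dk].
by rewrite /in_range jn /=; case: s; rewrite ltn_mod; lia.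
Qed.

Lemma cn_coord_in_range x : in_range x -> in_range (cn_coord x).
Proof. by move=> x_in; apply/col_step_in_range/row_step_in_range. Qed.

Lemma row_step_inj : {in in_range &, injective row_step}.
Proof.
move=> [j d] [j' d'] /andP [/= jn dk] /andP [/= jn' dk']; rewrite /row_step /=.
case: eqP => [->|_]; case: eqP => [->|_] [] //.
  by move/eqP; rewrite eqn_modDr !modn_small // => /eqP ->.
by move=> ej ->; congr pair; move: ej; rewrite /col_pred; do 2 case: eqP; lia.
Qed.

Lemma col_step_inj s : {in in_range &, injective (col_step s)}.
Proof.
move=> [j d] [j' d'] /andP [/= _ dk] /andP [/= _ dk'] [-> /eqP].
by case: s; rewrite -?(addn1 d) -?(addn1 d') eqn_modDr !modn_small // => /eqP ->.
Qed.

Lemma cn_coord_inj : {in in_range &, injective cn_coord}.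
Proof.
move=> x y x_in y_in; rewrite /cn_coord => e.
have e1 : (row_step x).1 = (row_step y).1 := congr1 fst e.
move: e; rewrite e1 => /(col_step_inj (row_step_in_range x_in) (row_step_in_range y_in)).
exact: row_step_inj.
Qed.

Lemma cn_coordE j d : d < k.-1 ->
  cn_coord (j, d) = (col_pred j, if col_pred j <= g then (d + 2) %% k else d).
Proof.
move=> dk; rewrite /cn_coord /row_step /col_step /= ifN; last by lia.
case: ifP => _ //=; first by rewrite addn2.
by rewrite addSnnS prednK ?modnDr ?modn_small //; lia.
Qed.

Lemma cn_coord_top j :
  cn_coord (j, k.-1) = (col_jump j, if col_jump j <= g then 1 else k.-1).
Proof.
rewrite /cn_coord /row_step /col_step /= eqxx /=.
by case: ifP => _; rewrite modn_small //; lia.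
Qed.

Lemma reaches_strip_edge j d : d < k.-1 -> g < j < n -> reach (j, d) (g.+1, d).
Proof.
move=> dk; elim: j => [|j IH] /andP [gj jn]; first by lia.
have [->|jg] := eqVneq j g; first exact: reaches_refl.
by apply: reaches_step; rewrite cn_coordE // col_predS ifN; [apply: IH | ]; lia.
Qed.

Hypotheses (k_odd : odd k) (n_odd : odd n).
Hypothesis gE : g = gcdn n k.-1.
Hypothesis gcd_gS : gcdn g.+1 k.-1 = 2.

Lemma kE : k = (k./2).*2.+1.
Proof. by rewrite -[in LHS](odd_double_half k) k_odd. Qed.

Lemma g_gt0 : 0 < g.
Proof. by rewrite gE gcdn_gt0; apply/orP; left; lia. Qed.

Lemma g_odd : odd g.
Proof. by apply: (dvdn_odd _ n_odd); rewrite gE dvdn_gcdl. Qed.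

Lemma km1_even : odd k.-1 = false.
Proof. by move: k_odd; case: (k) k_ge3 => // k' _ /=; case: (odd k'). Qed.

Lemma g_lt_km1 : g < k.-1.
Proof.
have g_le : g <= k.-1 by rewrite gE; apply: dvdn_leq; [lia | exact: dvdn_gcdr].
rewrite ltn_neqAle g_le andbT; apply/eqP => eg.
by have := g_odd; rewrite eg km1_even.
Qed.

Definition strip_pred p := (p + g) %% g.+1.

Lemma strip_pred_le p : strip_pred p <= g.
Proof. by rewrite -ltnS ltn_mod. Qed.

Lemma strip_pred0 : strip_pred 0 = g.
Proof. by rewrite /strip_pred modn_small. Qed.

Lemma strip_predS p : p < g -> strip_pred p.+1 = p.
Proof. by move=> pg; rewrite /strip_pred addSnnS modnDr modn_small //; lia. Qed.

Lemma reaches_strip_step p d : p <= g -> d < k.-1 ->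
  reach (p, d) (strip_pred p, (d + 2) %% k).
Proof.
move=> pg dk; apply: reaches_step; rewrite cn_coordE //.
case: p pg => [|p] pg; last first.
  by rewrite col_predS strip_predS // ifT; [exact: reaches_refl | lia].
(* Column 0 wraps around to n - 1, outside the strip, and walks back to g. *)
have gk := g_lt_km1.
rewrite col_pred0 strip_pred0 ifN; last by lia.
apply: reaches_trans (reaches_strip_edge dk _) _; first by lia.
by apply: reaches_step; rewrite cn_coordE // col_predS leqnn; exact: reaches_refl.
Qed.

(* Inside the strip each step adds 2 to the diagonal modulo the odd k, so no
   step before the a-th one (a < k) starts from the top diagonal. *)
Lemma reaches_top_diag a p d : a < k -> p <= g -> d < k ->
  (d + 2 * a) %% k = k.-1 -> reach (p, d) (iter a strip_pred p, k.-1).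
Proof.
have k_eq := kE.
elim: a p d => [|a IH] p d ak pg dk.
  by rewrite addn0 modn_small // => ->; exact: reaches_refl.
move=> top; have dk1 : d < k.-1.
  rewrite ltn_neqAle -ltnS prednK ?dk ?andbT; last by lia.
  apply/eqP => ed; move: top; rewrite ed.
  rewrite (_ : k.-1 + 2 * a.+1 = (2 * a + 1) + k); last by lia.
  by rewrite modnDr modn_small_twice; [case: ifP | ]; lia.
apply: reaches_trans (reaches_strip_step pg dk1) _.
rewrite iterSr; apply: IH; rewrite ?strip_pred_le ?ltn_mod; try lia.
by rewrite modnDml -addnA -mulnS.
Qed.

Lemma exists_steps_to_top d : d < k -> exists2 a, a < k & (d + 2 * a) %% k = k.-1.
Proof.
(* (k + 1) / 2 is the inverse of 2 modulo k. *)
have k_eq := kE.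
move=> dk; exists (((k.-1 - d) * (k./2).+1) %% k); first by rewrite ltn_mod; lia.
rewrite -modnDmr modnMmr modnDmr.
rewrite (_ : d + 2 * ((k.-1 - d) * (k./2).+1) = (k.-1 - d) * k + k.-1); last by nia.
by rewrite modnMDl modn_small; lia.
Qed.

Lemma reaches_top_in_strip p d : p <= g -> d < k ->
  exists2 q, q <= g & reach (p, d) (q, k.-1).
Proof.
move=> pg dk; have [a ak top] := exists_steps_to_top dk.
exists (iter a strip_pred p); last exact: reaches_top_diag.
by case: a {ak top} => //= a; exact: strip_pred_le.
Qed.

Lemma iter_col_jump m j : j < n -> iter m col_jump j = (j + m * k.-1) %% n.
Proof. exact: iter_addmod. Qed.

Lemma reaches_landing m j : j < n ->
    (forall i, 0 < i <= m -> g < iter i col_jump j) ->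
  iter m.+1 col_jump j <= g -> reach (j, k.-1) (iter m.+1 col_jump j, 1).
Proof.
elim: m j => [|m IH] j jn above landed; apply: reaches_step; rewrite cn_coord_top.
  by rewrite ifT //; exact: reaches_refl.
rewrite ifN; last by have := above 1 isT; rewrite /=; lia.
rewrite iterSr; apply: IH; last by rewrite -iterSr.
  exact: col_jump_lt.
by move=> i /andP [i0 im]; rewrite -iterSr; apply: above; lia.
Qed.

Definition Ng := n %/ g.
Definition qg := k.-1 %/ g.

Lemma nE : n = Ng * g.
Proof. by rewrite /Ng divnK // gE dvdn_gcdl. Qed.

Lemma km1E : k.-1 = qg * g.
Proof. by rewrite /qg divnK // gE dvdn_gcdr. Qed.

Lemma coprime_Ng_qg : coprime Ng qg.
Proof.
apply/eqP; apply/eqP; rewrite -(eqn_pmul2l g_gt0) muln1 muln_gcdr.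
by rewrite ![g * _]mulnC -nE -km1E -gE.
Qed.

Lemma Ng_gt1 : 1 < Ng.
Proof. by have := nE; have := g_lt_km1; case: Ng => [|[|N]]; lia. Qed.

Lemma exists_neg_inv_qg : exists2 a, 0 < a < Ng & Ng %| 1 + a * qg.
Proof.
have N_gt0 : 0 < Ng by have := Ng_gt1; lia.
have [a aN] := Bezoutl qg N_gt0; rewrite (eqP coprime_Ng_qg) => dvd.
exists a => //; rewrite aN andbT lt0n; apply/eqP => a0.
by move: dvd; rewrite a0 addn0 dvdn1 => /eqP N1; have := Ng_gt1; lia.
Qed.

(* Since gcd(n, k - 1) = g, jumping by k - 1 columns visits every column
   congruent to j mod g, in particular one of 0, ..., g - 1. *)
Lemma exists_landing j : j < n -> exists m, iter m.+1 col_jump j <= g.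
Proof.
move=> jn; have [a /andP [a0 aN] /dvdnP [z hz]] := exists_neg_inv_qg.
set c := j %/ g; exists (a * c + Ng).-1.
rewrite prednK; last by rewrite ltn_addl // ltnW // Ng_gt1.
rewrite iter_col_jump // (divn_eq j g) -/c km1E.
have -> : c * g + j %% g + (a * c + Ng) * (qg * g) = j %% g + (c * z + qg) * n.
  by rewrite nE; nia.
rewrite addnC modnMDl modn_small; have := ltn_pmod j g_gt0; lia.
Qed.

Lemma first_landing j : j < n -> exists m,
  (forall i, 0 < i <= m -> g < iter i col_jump j) /\ iter m.+1 col_jump j <= g.
Proof.
move=> jn; have [m landed m_min] := ex_minnP (exists_landing jn).
exists m; split => // i /andP [i0 im]; rewrite ltnNge; apply/negP => hi.
by have := m_min i.-1; rewrite prednK // => /(_ hi); lia.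
Qed.

Lemma iter_col_jump_modg m j : j < n -> iter m col_jump j %% g = j %% g.
Proof.
move=> jn; rewrite iter_col_jump // modn_dvdm; last by rewrite nE dvdn_mull.
by rewrite km1E mulnA addnC modnMDl.
Qed.

Lemma landing_inner s m : 0 < s < g -> iter m.+1 col_jump s <= g ->
  iter m.+1 col_jump s = s.
Proof.
move=> /andP [s0 sg] landed; have sn : s < n by have := g_lt_km1; lia.
have := iter_col_jump_modg m.+1 sn; rewrite (modn_small sg).
case: (ltngtP (iter m.+1 col_jump s) g) => [lt|gt|->].
- by rewrite modn_small.
- by lia.
- by rewrite modnn; lia.
Qed.

(* From column g the jumps hit column 0 after fewer than Ng steps, whereas
   returning to column g takes a multiple of Ng steps. *)
Lemma landing_g m : (forall i, 0 < i <= m -> g < iter i col_jump g) ->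
  iter m.+1 col_jump g <= g -> iter m.+1 col_jump g = 0.
Proof.
move=> above landed; have gn : g < n by have := g_lt_km1; lia.
have := iter_col_jump_modg m.+1 gn; rewrite modnn.
case: (ltngtP (iter m.+1 col_jump g) g) => [lt|gt|eg]; first by rewrite modn_small.
  by lia.
have [a /andP [a0 aN] /dvdnP [z hz]] := exists_neg_inv_qg.
have ma : m < a.
  rewrite ltnNge; apply/negP => am; have := above a; rewrite a0 am => /(_ isT).
  rewrite iter_col_jump // km1E (_ : g + a * (qg * g) = z * n) ?modnMl ?ltn0 //.
  by rewrite nE; nia.
move: eg; rewrite iter_col_jump // => /eqP.
rewrite -{2}(modn_small gn) -{2}[g]addn0 eqn_modDl mod0n -/(dvdn _ _).
rewrite nE km1E mulnA dvdn_pmul2r ?g_gt0 // Gauss_dvdl ?coprime_Ng_qg //.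
by move/(dvdn_leq (ltn0Sn _)); lia.
Qed.

(* First-return map of the top diagonal of the strip: after landing on diagonal 1
   a point climbs k - 1 steps, moving one column left (cyclically) each time. *)
Definition strip_return := iter k.-1 strip_pred.

Lemma iter_strip_return a s : s <= g ->
  iter a strip_return s = (s + a * (k.-1 * g)) %% g.+1.
Proof. by move=> sg; rewrite /strip_return -iterM mulnA; apply: iter_addmod. Qed.

Lemma iter_strip_return_le a s : s <= g -> iter a strip_return s <= g.
Proof. by move=> sg; rewrite iter_strip_return // -ltnS ltn_mod. Qed.

Lemma odd_iter_strip_return a s : s <= g -> odd (iter a strip_return s) = odd s.
Proof.
move=> sg; rewrite iter_strip_return // odd_mod; last by rewrite /= g_odd.
by rewrite oddD !oddM km1_even /= andbF addbF.
Qed.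

(* The return map is the translation by -(k - 1) modulo g + 1; as
   gcd(g + 1, k - 1) = 2, its orbits are the two parity classes. *)
Lemma iter_strip_return_onto s t : s <= g -> t <= g -> odd s = odd t ->
  exists a, iter a strip_return s = t.
Proof.
move=> sg tg st; pose h := g.+1 %/ 2; pose r := k.-1 %/ 2.
have hE : g.+1 = 2 * h by rewrite mulnC divnK // dvdn2 /= g_odd.
have rE : k.-1 = 2 * r by rewrite mulnC divnK // dvdn2 km1_even.
have cop : gcdn h r = 1.
  by apply/eqP; rewrite -(eqn_pmul2l (isT : 0 < 2)) muln1 muln_gcdr -hE -rE gcd_gS.
have h_gt0 : 0 < h by lia.
have [b _] := Bezoutl r h_gt0; rewrite cop => /dvdnP [z hz].
pose c := (t + g.+1 - s)./2.
have cE : c.*2 = t + g.+1 - s.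
  have := odd_double_half (t + g.+1 - s); rewrite oddB; last by lia.
  by rewrite oddD /= g_odd st; case: (odd t) => /=; rewrite -/c; lia.
exists (b * c); rewrite iter_strip_return //.
apply/eqP; rewrite -(modn_small (_ : t < g.+1)) // -(eqn_modDr (c * 2 * g)).
have -> : s + b * c * (k.-1 * g) + c * 2 * g = s + (c * g * z) * g.+1.
  by rewrite rE hE; nia.
have -> : t + c * 2 * g = s + (t + g - s) * g.+1 by move: cE; rewrite -muln2; nia.
by rewrite ![s + _]addnC !modnMDl.
Qed.

Lemma reaches_strip_return_from_bottom s : s <= g -> reach (s, 1) (strip_return s, k.-1).
Proof.
move=> sg; apply: reaches_top_diag => //; try lia.
by rewrite (_ : 1 + 2 * k.-1 = k.-1 + k) ?modnDr ?modn_small //; lia.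
Qed.

Lemma reaches_strip_return s : 0 < s < g -> reach (s, k.-1) (strip_return s, k.-1).
Proof.
move=> s_in; have sn : s < n by have := g_lt_km1; lia.
have [m [above landed]] := first_landing sn.
apply: reaches_trans (reaches_landing sn above landed) _.
by rewrite landing_inner //; apply: reaches_strip_return_from_bottom; lia.
Qed.

Lemma reaches_strip_return0_from_g : reach (g, k.-1) (strip_return 0, k.-1).
Proof.
have gn : g < n by have := g_lt_km1; lia.
have [m [above landed]] := first_landing gn.
apply: reaches_trans (reaches_landing gn above landed) _.
by rewrite landing_g //; apply: reaches_strip_return_from_bottom.
Qed.

Lemma reaches_iter_strip_return a s : s <= g ->
    (forall b, b < a -> 0 < iter b strip_return s < g) ->
  reach (s, k.-1) (iter a strip_return s, k.-1).
Proof.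
move=> sg; elim: a => [|a IH] inner; first exact: reaches_refl.
apply: reaches_trans (IH _) _; first by move=> b ba; apply: inner; lia.
by rewrite iterS; apply: reaches_strip_return; apply: inner.
Qed.

Lemma reaches_strip_end s t : s <= g -> (t == 0) || (t == g) -> odd s = odd t ->
  reach (s, k.-1) (t, k.-1).
Proof.
move=> sg t_end st.
pose at_end a := (iter a strip_return s == 0) || (iter a strip_return s == g).
have [a ast] : exists a, iter a strip_return s = t.
  by apply: iter_strip_return_onto => //; case/orP: t_end => /eqP ->.
have ex_end : exists a, at_end a by exists a; rewrite /at_end ast.
have [m m_end m_min] := ex_minnP ex_end.
(* As g is odd, 0 and g have different parities: the first of them met is t. *)
have -> : t = iter m strip_return s.
  have := odd_iter_strip_return m sg; rewrite st; have := g_odd.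
  by case/orP: m_end => /eqP ->; case/orP: t_end => /eqP ->; rewrite //= => ->.
apply: reaches_iter_strip_return => // b bm; have := iter_strip_return_le b sg.
have : ~~ at_end b by apply/negP => /m_min; lia.
by rewrite /at_end negb_or => /andP [/eqP ? /eqP ?]; lia.
Qed.

Lemma reaches_origin_from_top s : s <= g -> reach (s, k.-1) (0, k.-1).
Proof.
move=> sg; have [s_odd|s_even] := boolP (odd s); last first.
  by apply: reaches_strip_end => //; rewrite (negbTE s_even).
apply: reaches_trans (@reaches_strip_end s g sg _ _) _; rewrite ?eqxx ?orbT ?g_odd //.
apply: reaches_trans reaches_strip_return0_from_g _.
have return0_le := iter_strip_return_le 1 (leq0n g).
exact: (@reaches_strip_end _ 0 return0_le isT (odd_iter_strip_return 1 (leq0n g))).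
Qed.

Lemma reaches_top x : in_range x -> exists2 p, p <= g & reach x (p, k.-1).
Proof.
case: x => j d /andP [/= jn dk].
have [->|dk1] := eqVneq d k.-1.
  have [jg|gj] := leqP j g; first by exists j => //; exact: reaches_refl.
  have [m [above landed]] := first_landing jn.
  have [p pg r] := reaches_top_in_strip landed (ltnW k_ge3).
  by exists p => //; apply: reaches_trans (reaches_landing jn above landed) r.
have [jg|gj] := leqP j g; first exact: reaches_top_in_strip.
have [|p pg r] := @reaches_top_in_strip g ((d + 2) %% k) (leqnn g).
  by rewrite ltn_mod; lia.
exists p => //; apply: reaches_trans (@reaches_strip_edge j d _ _) _; try lia.
by apply: reaches_step; rewrite cn_coordE ?col_predS ?leqnn //; lia.
Qed.

Lemma reaches_origin x : in_range x -> reach x (0, k.-1).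
Proof.
move=> /reaches_top [p pg r].
exact: reaches_trans r (reaches_origin_from_top pg).
Qed.

End Dynamics.

Lemma stepE n (P : pred 'I_n) f x t0 : 0 < t0 <= n -> P (iter t0 f x) ->
  (forall t, 0 < t < t0 -> ~~ P (iter t f x)) -> step P f x = iter t0 f x.
Proof.
move=> t0_in Pt0 notP; rewrite /step; set p := fun t => P (iter t f x).
have has_p : has p (iota 1 n) by apply/hasP; exists t0; rewrite ?mem_iota //; lia.
have find_lt : find p (iota 1 n) < n by rewrite -[n in _ < n](size_iota 1) -has_find.
suff -> : (find p (iota 1 n)).+1 = t0 by [].
have := nth_find 0 has_p; rewrite nth_iota // add1n => Pfind.
case: (ltngtP (find p (iota 1 n)).+1 t0) => [lt|gt|//].
  by move: (notP (find p (iota 1 n)).+1); rewrite lt -/(p _) Pfind => /(_ isT).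
have := @before_find _ 0 p (iota 1 n) t0.-1; rewrite nth_iota; last by lia.
rewrite add1n prednK; last by lia.
by move/(_ gt); rewrite /p Pt0.
Qed.

Section CyclicShifts.
Variable n' : nat.
Local Notation n := n'.+1.

Lemma val_ord_pred (y : 'I_n) : val (@ord_pred n y) = if y == 0 :> nat then n' else y.-1.
Proof.
rewrite /=; case: eqP => [->|y0]; first by rewrite modn_small.
have yn := ltn_ord y.
by rewrite (_ : (y + n).-1 = y.-1 + n) ?modnDr ?modn_small; lia.
Qed.

Lemma val_ordS (y : 'I_n) : val (@ordS n y) = if y.+1 == n then 0 else y.+1.
Proof.
rewrite /=; case: eqP => [->|y0]; first by rewrite modnn.
by rewrite modn_small //; have := ltn_ord y; lia.
Qed.

Lemma val_iter_ord_pred t (y : 'I_n) : t <= n ->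
  val (iter t (@ord_pred n) y) = if t <= y then y - t else y + n - t.
Proof.
have yn := ltn_ord y.
elim: t => [|t IH] tn; first by rewrite subn0.
rewrite iterS val_ord_pred IH; last by lia.
by case: (leqP t y) => h1; case: (leqP t.+1 y) => h2; case: eqP => h3; lia.
Qed.

Lemma val_iter_ordS t (y : 'I_n) : t <= n ->
  val (iter t (@ordS n) y) = if y + t < n then y + t else y + t - n.
Proof.
have yn := ltn_ord y.
elim: t => [|t IH] tn; first by rewrite addn0 yn.
rewrite iterS val_ordS IH; last by lia.
by case: (ltnP (y + t) n) => h1; case: (ltnP (y + t.+1) n) => h2; case: eqP => h3; lia.
Qed.

End CyclicShifts.

Section Cells.
Variables n' k : nat.
Local Notation n := n'.+1.
Hypotheses (k_ge3 : 3 <= k) (k_lt_n : k < n).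

Local Notation F := (cyc_diag n k).

Lemma mem_cyc_diag (a b : 'I_n) :
  ((a, b) \in F) = (b <= a) && (a - b < k) || (a < b) && (a + n - b < k).
Proof.
rewrite inE /=; have := ltn_ord a; have := ltn_ord b => bn an.
rewrite modn_small_twice; last by lia.
by case: (leqP b a) => h1; case: ifP => h2; lia.
Qed.

Definition addn_wrap j d := if j + d < n then j + d else j + d - n.

Definition cell_of (x : nat * nat) : cell n := (inord (addn_wrap x.1 x.2), inord x.1).

Lemma cell_of1 x : x.1 < n -> x.2 < k -> val (cell_of x).1 = addn_wrap x.1 x.2.
Proof. by move=> jn dk; rewrite /cell_of /= inordK // /addn_wrap; case: ifP; lia. Qed.

Lemma cell_of2 x : x.1 < n -> val (cell_of x).2 = x.1.
Proof. by move=> jn; rewrite /cell_of /= inordK. Qed.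

Lemma cell_val_inj (c d : cell n) : val c.1 = val d.1 -> val c.2 = val d.2 -> c = d.
Proof. by case: c d => [a b] [a' b'] /= /val_inj -> /val_inj ->. Qed.

Lemma addn_wrap_cases j d :
  (j + d < n /\ addn_wrap j d = j + d) \/ (n <= j + d /\ addn_wrap j d = j + d - n).
Proof. by rewrite /addn_wrap; case: ifP => h; [left | right]; split => //; lia. Qed.

Lemma col_pred_cases j :
  (j = 0 /\ col_pred n j = n') \/ (0 < j /\ col_pred n j = j.-1).
Proof. by rewrite /col_pred; case: eqP => h; [left | right]; split => //; lia. Qed.

Lemma col_jump_cases j : j < n ->
  (j + k.-1 < n /\ col_jump n k j = j + k.-1) \/
  (n <= j + k.-1 /\ col_jump n k j = j + k.-1 - n).
Proof.
move=> jn; rewrite /col_jump modn_small_twice; last by lia.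
by case: ifP => h; [left | right]; split => //; lia.
Qed.

Ltac unwrap := repeat match goal with
  | |- context [col_pred _ ?x] => case: (col_pred_cases x) => [[? ->]|[? ->]]
  | |- context [col_jump _ _ ?x] =>
    case: (@col_jump_cases x ltac:(lia)) => [[? ->]|[? ->]]
  | |- context [addn_wrap ?x ?y] => case: (addn_wrap_cases x y) => [[? ->]|[? ->]]
  end.
Ltac wrap_arith := rewrite /=; unwrap; repeat (case: ifP => ?); lia.

(* [step_by t] evaluates a [step] whose next filled cell is t shifts away. *)
Ltac step_by t := rewrite (@stepE _ _ _ _ t);
  try apply: cell_val_inj; try move=> ? ?;
  rewrite ?mem_cyc_diag ?val_iter_ord_pred ?val_iter_ordS ?cell_of1 ?cell_of2 //;
  try lia; wrap_arith.

Lemma sR_back_cell_of x : in_range n k x ->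
  sR F false (cell_of x) = cell_of (row_step n k x).
Proof.
case: x => j d /andP [/= jn dk]; rewrite /row_step /=.
by case: eqP => [->|dk1]; rewrite /sR /shift; [step_by (n - k.-1) | step_by 1].
Qed.

Lemma sC_cell_of s x : in_range n k x -> sC F s (cell_of x) = cell_of (col_step k s x).
Proof.
case: x => j d /andP [/= jn dk]; rewrite /col_step /=.
case: s; rewrite /sC /shift.
  have [->|dk1] := eqVneq d k.-1.
    by rewrite prednK ?modnn; [step_by (n - k.-1) | lia].
  by rewrite modn_small; [step_by 1 | lia].
case: d dk => [|d] dk.
  by rewrite modn_small; [step_by (n - k.-1) | lia].
by rewrite addSnnS prednK ?modnDr ?modn_small; [step_by 1 | lia | lia].
Qed.

Definition back_rows : 'I_n -> bool := fun=> false.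
Definition strip_cols g : 'I_n -> bool := fun j => j <= g.

Lemma CN_cell_of g x : in_range n k x ->
  CN F back_rows (strip_cols g) (cell_of x) = cell_of (cn_coord n k g x).
Proof.
move=> x_in; have y_in : in_range n k (row_step n k x) by apply: row_step_in_range.
rewrite [LHS]/CN /back_rows sR_back_cell_of // /strip_cols cell_of2.
  exact: sC_cell_of.
by case/andP: y_in.
Qed.

Lemma cell_of_in x : in_range n k x -> cell_of x \in F.
Proof.
case: x => j d /andP [/= jn dk].
by rewrite mem_cyc_diag cell_of1 ?cell_of2 //; wrap_arith.
Qed.

Lemma cell_of_inj : {in in_range n k &, injective cell_of}.
Proof.
move=> [j d] [j' d'] /andP [/= jn dk] /andP [/= jn' dk'] e.
have e1 := congr1 (fun c : cell n => val c.1) e.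
have e2 := congr1 (fun c : cell n => val c.2) e.
move: e1 e2; cbv beta; rewrite !cell_of1 ?cell_of2 //= => e1 e2.
by subst j'; congr pair; move: e1; unwrap; lia.
Qed.

Lemma cell_of_onto c : c \in F -> exists2 x, in_range n k x & c = cell_of x.
Proof.
case: c => a b; have := ltn_ord a; have := ltn_ord b.
rewrite mem_cyc_diag => bn an ab_in.
exists (val b, if b <= a then a - b else a + n - b).
  by apply/andP; split => //=; case: ifP; lia.
apply/esym/cell_val_inj; rewrite ?cell_of1 ?cell_of2 //=; try by case: ifP; lia.
by case: (leqP b a) => ba; unwrap; lia.
Qed.

Local Notation g := (gcdn n k.-1).
Hypotheses (k_odd : odd k) (n_odd : odd n).
Hypothesis gcd_gS : gcdn g.+1 k.-1 = 2.

Local Notation CNs := (CN F back_rows (strip_cols g)).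

Lemma CN_in : {in F, forall c, CNs c \in F}.
Proof.
move=> c /cell_of_onto [x x_in ->]; rewrite CN_cell_of //.
exact/cell_of_in/cn_coord_in_range.
Qed.

Lemma CN_inj : {in F &, injective CNs}.
Proof.
move=> c c' /cell_of_onto [x x_in ->] /cell_of_onto [y y_in ->].
have cx_in : in_range n k (cn_coord n k g x) by apply: cn_coord_in_range.
have cy_in : in_range n k (cn_coord n k g y) by apply: cn_coord_in_range.
rewrite !CN_cell_of // => e; congr cell_of.
by apply: (@cn_coord_inj n k g) => //; exact: cell_of_inj e.
Qed.

Lemma CN_reaches_origin : {in F, forall c, reaches CNs c (cell_of (0, k.-1))}.
Proof.
move=> c /cell_of_onto [x x_in ->].
have [m <-] := reaches_origin k_ge3 k_lt_n k_odd n_odd (erefl g) gcd_gS x_in.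
exists m; apply: iter_conj_in x_in.
- by move=> y; apply: cn_coord_in_range.
- by move=> y; apply: CN_cell_of.
Qed.

End Cells.

Theorem proposition5p1 (n k : nat) :
  odd n -> odd k -> 3 <= k -> k < n ->
  gcdn (gcdn n (k - 1)).+1 (k - 1) = 2 ->
  exists R C : 'I_n -> bool, is_solution (cyc_diag n k) R C.
Proof.
move=> n_odd k_odd k_ge3 k_lt_n; rewrite subn1.
case: n n_odd k_lt_n => [|n'] n_odd k_lt_n gcd_gS; first by lia.
have CN_in := CN_in k_ge3 k_lt_n; have CN_inj := CN_inj k_ge3 k_lt_n.
exists (@back_rows n'), (@strip_cols n' (gcdn n'.+1 k.-1)); split => //.
have sink := CN_reaches_origin k_ge3 k_lt_n k_odd n_odd gcd_gS.
exact: (reaches_in_of_sink CN_in CN_inj sink).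
Qed.
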